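(* Let $\mathcal{K}$ be a Hilbert space, let $A$ be a closable, densely defined operator in $\mathcal{K}$, let $S$ be a closed densely defined operator in $\mathcal{K}$ and let $z\in\rho(S)$. Suppose that for some $m\in\mathbb{N}$, $$\mathcal{D}(S^m)\subseteq\mathcal{D}(\bar A),\qquad \mathcal{D}(S^{*m})\subseteq\mathcal{D}(A^* ).$$ Then $\mathrm{ad}((S-z)^{-1},\bar A)=(S-z)^{-1}\bar A-\bar A(S-z)^{-1}$ is a closable densely defined operator. If it is additionally bounded, then $$\|\mathrm{ad}((S-z)^{-m},\bar A)\|\le m\,\|(S-z)^{-1}\|^{m-1}\,\|\mathrm{ad}((S-z)^{-1},\bar A)\|.$$
   Context: $\rho(S)$ is the resolvent set of $S$. For operators $S,T$, $\mathrm{ad}(S,T):=ST-TS$ with natural domains. An operator $T$ is bounded if $\|Tf\|\le c\|f\|$ for all $f\in\mathcal{D}(T)$ and some $c\ge0$; $\|T\|=\sup\{\|Tf\|:f\in\mathcal{D}(T),\|f\|\le1\}$. *)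

From HB Require Import structures.
From mathcomp Require Import all_boot all_order all_algebra.
From mathcomp Require Import all_classical all_reals.
From mathcomp.real_closed Require Import complex.
Set Implicit Arguments. Unset Strict Implicit. Unset Printing Implicit Defensive.
Import Order.TTheory GRing.Theory Num.Theory.
Local Open Scope ring_scope.

Section Hilbert.
Variables (R : realType) (V : lmodType R[i]) (ip : V -> V -> R[i]).

Definition is_inner_product : Prop :=
  [/\ (forall (a : R[i]) (x y w : V), ip (a *: x + y) w = a * ip x w + ip y w),
      (forall x y : V, ip x y = (ip y x)^*),
      (forall x : V, 0 <= ip x x) &
      (forall x : V, ip x x = 0 -> x = 0)].

Definition hnorm (x : V) : R := Num.sqrt (complex.Re (ip x x)).

Definition converges (u : nat -> V) (l : V) : Prop :=
  forall e : R, 0 < e -> exists N, forall n, (N <= n)%N -> hnorm (u n - l) < e.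

Definition is_cauchy (u : nat -> V) : Prop :=
  forall e : R, 0 < e -> exists N, forall m n, (N <= m)%N -> (N <= n)%N ->
    hnorm (u m - u n) < e.

Definition is_complete : Prop :=
  forall u : nat -> V, is_cauchy u -> exists l, converges u l.

Record op := Op { dom : V -> Prop ; app : V -> V }.

Definition is_lin_op (T : op) : Prop :=
  [/\ dom T 0,
      (forall (a : R[i]) x y, dom T x -> dom T y -> dom T (a *: x + y)) &
      (forall (a : R[i]) x y, dom T x -> dom T y ->
         app T (a *: x + y) = a *: app T x + app T y)].

Definition densely_defined (T : op) : Prop :=
  forall x e, 0 < e -> exists y, dom T y /\ hnorm (x - y) < e.

Definition extends (T B : op) : Prop :=
  forall f, dom T f -> dom B f /\ app B f = app T f.

Definition is_closed (T : op) : Prop :=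
  forall (u : nat -> V) x y, (forall n, dom T (u n)) ->
    converges u x -> converges (fun n => app T (u n)) y ->
    dom T x /\ app T x = y.

Definition closable (T : op) : Prop :=
  exists B, [/\ is_lin_op B, is_closed B & extends T B].

Definition is_closure (T B : op) : Prop :=
  [/\ is_lin_op B, is_closed B, extends T B &
      forall C, is_lin_op C -> is_closed C -> extends T C -> extends B C].

Definition is_adjoint (T Ts : op) : Prop :=
  (forall g, dom Ts g <-> exists h, forall f, dom T f -> ip (app T f) g = ip f h)
  /\ (forall g f, dom Ts g -> dom T f -> ip (app T f) g = ip f (app Ts g)).

Definition bounded (T : op) : Prop :=
  exists c : R, 0 <= c /\ forall f, dom T f -> hnorm (app T f) <= c * hnorm f.

Definition op_norm (T : op) : R :=
  sup [set r : R | exists f, [/\ dom T f, hnorm f <= 1 & r = hnorm (app T f)]].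

Definition op_mul (S T : op) : op :=
  Op (fun f => dom T f /\ dom S (app T f)) (fun f => app S (app T f)).

Definition op_sub (S T : op) : op :=
  Op (fun f => dom S f /\ dom T f) (fun f => app S f - app T f).

Definition op_id : op := Op (fun _ => True) id.

Fixpoint op_pow (T : op) (n : nat) : op :=
  match n with 0 => op_id | n.+1 => op_mul T (op_pow T n) end.

Definition op_shift (S : op) (z : R[i]) : op :=
  Op (dom S) (fun f => app S f - z *: f).

Definition ad (S T : op) : op := op_sub (op_mul S T) (op_mul T S).

Definition is_resolvent (S : op) (z : R[i]) (Rz : op) : Prop :=
  [/\ is_lin_op Rz, (forall f, dom Rz f), bounded Rz,
      (forall f, dom S (app Rz f) /\ app (op_shift S z) (app Rz f) = f) &
      (forall f, dom S f -> app Rz (app (op_shift S z) f) = f)].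

Definition in_resolvent_set (S : op) (z : R[i]) : Prop :=
  exists Rz, is_resolvent S z Rz.

Definition dom_sub (S T : op) : Prop := forall f, dom S f -> dom T f.

End Hilbert.

From HB Require Import structures.
From mathcomp Require Import all_boot all_order all_algebra.
From mathcomp Require Import all_classical all_reals.
From mathcomp.real_closed Require Import complex.
From mathcomp Require Import ring lra.
Import Order.TTheory GRing.Theory Num.Theory.
Local Open Scope ring_scope.

Set Implicit Arguments. Unset Strict Implicit. Unset Printing Implicit Defensive.

(* The resolvent R = (S - z)^-1 has a Hilbert adjoint R^* (by Riesz) with
   S^* R^* = 1 + z^* R^*.  Hence R^m maps into D(S^m), which lies in D(Abar), and
   R^{*m} maps into the domain of S^{*m}, which lies in the domain of A^*; both ranges
   are dense since R and R^* are injective.  Pairing against g = R^{*m} h gives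
   <ad(R, Abar) p, g> = <p, A^* R^* g - R^* A^* g>, so ad(R, Abar) has a densely defined
   formal adjoint, hence is closable, and it is densely defined on the range of R^m.
   For the bound, the same pairing turns ad(R^m, Abar) into
   D_m g = A^* R^{*m} g - R^{*m} A^* g, which telescopes as
   D_{k+1} g = D_1 (R^{*k} g) + R^* D_k g, while ||D_1 g|| <= ||ad(R, Abar)|| ||g||
   by testing against the dense range of R^m. *)

Lemma norm_le_scale_eq0 (R : realFieldType) (a c : R) :
  0 <= c -> (forall e, 0 < e -> `|a| <= c * e) -> a = 0.
Proof.
move=> c0 H; apply/normr0_eq0/eqP; rewrite eq_le normr_ge0 andbT.
apply/ler_addgt0Pr => e e0; rewrite add0r.
have ce : c * (e / (c + 1)) <= e.
  by rewrite mulrA ler_pdivrMr ?ler_pM2r; lra.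
apply: le_trans ce; apply: H; rewrite divr_gt0 //; lra.
Qed.

Lemma eventually_invS_lt (R : realType) (e : R) :
  0 < e -> exists N, forall n, (N <= n)%N -> n.+1%:R^-1 < e.
Proof.
move=> e0; have [k hk] := ltr_add_invr e0; rewrite add0r in hk.
exists k => n kn; apply: le_lt_trans hk.
by rewrite lef_pV2 ?posrE ?ltr0Sn // ler_nat.
Qed.

Definition subspace (R : realType) (V : lmodType R[i]) (L : V -> Prop) :=
  L 0 /\ forall a x y, L x -> L y -> L (a *: x + y).

Section Subspace.
Variables (R : realType) (V : lmodType R[i]) (L : V -> Prop).
Hypothesis HL : subspace L.

Lemma subspaceZ a x : L x -> L (a *: x).
Proof. by case: HL => L0 Llin Lx; rewrite -(addr0 (a *: x)); apply: Llin. Qed.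

Lemma subspaceD x y : L x -> L y -> L (x + y).
Proof. by case: HL => _ Llin Lx Ly; rewrite -(scale1r x); apply: Llin. Qed.

End Subspace.

Section InnerProductSpace.
Variables (R : realType) (V : lmodType R[i]) (ip : V -> V -> R[i]).
Hypothesis Hip : is_inner_product ip.
Local Notation nrm := (hnorm ip).
Local Notation Re := complex.Re.
Local Notation Im := complex.Im.
Local Notation "x %:C" := (real_complex R x) : ring_scope.

Lemma complex_ReIm_eq (a b : R[i]) : Re a = Re b -> Im a = Im b -> a = b.
Proof. by case: a; case: b => ? ? ? ? /= -> ->. Qed.

Lemma Re_conj (a : R[i]) : Re a^* = Re a.
Proof. by case: a. Qed.

Lemma ipDl x y w : ip (x + y) w = ip x w + ip y w.
Proof. by case: Hip => H _ _ _; rewrite -{1}(scale1r x) H mul1r. Qed.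

Lemma ip0l w : ip 0 w = 0.
Proof. by apply: (@addrI _ (ip 0 w)); rewrite -ipDl !addr0. Qed.

Lemma ipZl a x w : ip (a *: x) w = a * ip x w.
Proof. by case: Hip => H _ _ _; rewrite -(addr0 (a *: x)) H ip0l addr0. Qed.

Lemma ipNl x w : ip (- x) w = - ip x w.
Proof. by rewrite -scaleN1r ipZl mulN1r. Qed.

Lemma ipBl x y w : ip (x - y) w = ip x w - ip y w.
Proof. by rewrite ipDl ipNl. Qed.

Lemma ipC x y : ip x y = (ip y x)^*.
Proof. by case: Hip. Qed.

Lemma ipDr w x y : ip w (x + y) = ip w x + ip w y.
Proof. by rewrite ipC ipDl rmorphD /= -!ipC. Qed.

Lemma ipZr w a x : ip w (a *: x) = a^* * ip w x.
Proof. by rewrite ipC ipZl rmorphM /= -ipC. Qed.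

Lemma ip0r w : ip w 0 = 0.
Proof. by rewrite ipC ip0l rmorph0. Qed.

Lemma ipNr w x : ip w (- x) = - ip w x.
Proof. by rewrite ipC ipNl rmorphN /= -ipC. Qed.

Lemma ipBr w x y : ip w (x - y) = ip w x - ip w y.
Proof. by rewrite ipDr ipNr. Qed.

Lemma hnorm_ge0 x : 0 <= nrm x.
Proof. exact: sqrtr_ge0. Qed.

Lemma ipxx x : ip x x = (nrm x ^+ 2)%:C.
Proof.
case: Hip => _ _ /(_ x) + _; rewrite lecE /= => /andP[/eqP Im0 Re_ge0].
by apply: complex_ReIm_eq; rewrite //= sqr_sqrtr.
Qed.

Lemma Re_ipxx x : Re (ip x x) = nrm x ^+ 2.
Proof. by rewrite ipxx. Qed.

Lemma hnorm_eq0 x : nrm x = 0 -> x = 0.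
Proof. by case: Hip => _ _ _ H Hx; apply: H; rewrite ipxx Hx expr0n. Qed.

Lemma hnorm0 : nrm 0 = 0.
Proof. by rewrite /hnorm ip0l sqrtr0. Qed.

Lemma hnormN x : nrm (- x) = nrm x.
Proof. by rewrite /hnorm ipNl ipNr opprK. Qed.

Lemma hnorm_distC x y : nrm (x - y) = nrm (y - x).
Proof. by rewrite -hnormN opprB. Qed.

Lemma ip_expand x y a :
  ip (x + a *: y) (x + a *: y) =
  ip x x + a^* * ip x y + a * (ip x y)^* + a * a^* * ip y y.
Proof. by rewrite !ipDl !ipDr !ipZl !ipZr -(ipC y x); ring. Qed.

Lemma hnorm_expand x y (t : R) :
  nrm (x + t%:C *: y) ^+ 2 = nrm x ^+ 2 + 2 * t * Re (ip x y) + t ^+ 2 * nrm y ^+ 2.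
Proof.
rewrite -!Re_ipxx ip_expand (ipxx x) (ipxx y).
by case: (ip x y) => p q; simpc; rewrite /=; ring.
Qed.

(* Cauchy-Schwarz, from the discriminant of t |-> ||x + t y||^2 *)
Lemma Re_ip_le x y : Re (ip x y) <= nrm x * nrm y.
Proof.
have [y0|ny] := eqVneq (nrm y) 0.
  by rewrite (hnorm_eq0 y0) ip0r hnorm0 mulr0.
set a := Re (ip x y); set n := nrm x; set m := nrm y.
have m2 : 0 < m ^+ 2 by rewrite exprn_gt0 // lt_def ny hnorm_ge0.
have := hnorm_expand x y (- (a / m ^+ 2)); rewrite -/a -/n -/m.
have -> : n ^+ 2 + 2 * - (a / m ^+ 2) * a + (- (a / m ^+ 2)) ^+ 2 * m ^+ 2
        = (n ^+ 2 * m ^+ 2 - a ^+ 2) / m ^+ 2 by field.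
move/(congr1 (fun r => r * m ^+ 2)); rewrite divfK ?gt_eqF // => disc.
have : a ^+ 2 <= (n * m) ^+ 2.
  by rewrite exprMn -subr_ge0 -disc mulr_ge0 ?sqr_ge0 // ltW.
have : 0 <= n * m by rewrite mulr_ge0 ?hnorm_ge0.
nra.
Qed.

Lemma Im_ip_le x y : Im (ip x y) <= nrm x * nrm y.
Proof.
have nrm_i : nrm ('i%C *: y) = nrm y.
  rewrite /hnorm ipZl ipZr mulrA (ipxx y).
  by congr (Num.sqrt _); simpc; rewrite /=; ring.
have := Re_ip_le x ('i%C *: y); rewrite nrm_i ipZr.
by case: (ip x y) => p q; simpc.
Qed.

Lemma norm_Re_ip_le x y : `|Re (ip x y)| <= nrm x * nrm y.
Proof.
rewrite ler_norml Re_ip_le andbT lerNl -raddfN -ipNl -(hnormN x).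
exact: Re_ip_le.
Qed.

Lemma norm_Im_ip_le x y : `|Im (ip x y)| <= nrm x * nrm y.
Proof.
rewrite ler_norml Im_ip_le andbT lerNl -raddfN -ipNl -(hnormN x).
exact: Im_ip_le.
Qed.

Lemma hnormD x y : nrm (x + y) <= nrm x + nrm y.
Proof.
have := hnorm_expand x y 1; rewrite scale1r.
have := Re_ip_le x y; have := hnorm_ge0 (x + y); have := hnorm_ge0 x.
have := hnorm_ge0 y; nra.
Qed.

Lemma hnormZ (t : R) x : nrm (t%:C *: x) = `|t| * nrm x.
Proof.
have := hnorm_expand 0 x t.
rewrite add0r hnorm0 ip0l /= expr0n /= add0r mulr0 add0r => H.
apply/eqP; rewrite -(@eqrXn2 _ 2) ?mulr_ge0 ?hnorm_ge0 //.
by rewrite H exprMn real_normK ?num_real.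
Qed.

Lemma ler_hnorm_dist x y : `|nrm x - nrm y| <= nrm (x - y).
Proof.
have := hnormD (y - x) x; have := hnormD (x - y) y.
rewrite !subrK hnorm_distC ler_norml => *; apply/andP; split; lra.
Qed.

Lemma parallelogram u v :
  nrm (u + v) ^+ 2 + nrm (u - v) ^+ 2 = 2 * nrm u ^+ 2 + 2 * nrm v ^+ 2.
Proof.
have := hnorm_expand u v (-1); rewrite rmorphN1 scaleN1r => ->.
by rewrite -[u + v]addr0 -{1}(scale1r v) -addrA addr0 hnorm_expand; ring.
Qed.

Lemma ip_eq_all a b : (forall f, ip f a = ip f b) -> a = b.
Proof.
move=> H; apply/eqP; rewrite -subr_eq0; apply/eqP; apply: hnorm_eq0.
have : ip (a - b) (a - b) = 0 by rewrite ipBr H subrr.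
by rewrite ipxx => /complexI/eqP; rewrite sqrf_eq0 => /eqP.
Qed.

Lemma orthogonal_of_nearest y l :
  (forall t : R[i], nrm y <= nrm (y - t *: l)) -> ip y l = 0.
Proof.
move=> H; set k := nrm l ^+ 2; set s := (k + 1)^-1.
set w := Re (ip y l) ^+ 2 + Im (ip y l) ^+ 2.
have expand : nrm (y - (s%:C * ip y l) *: l) ^+ 2 = nrm y ^+ 2 - w * (s * (2 - s * k)).
  rewrite -scaleNr -!Re_ipxx ip_expand (ipxx y) (ipxx l) /w -/k.
  by case: (ip y l) => p q; simpc; rewrite /=; ring.
have k0 : 0 <= k by exact: sqr_ge0.
have s0 : 0 < s by rewrite invr_gt0; lra.
have sk : s * k <= 1 by rewrite mulrC ler_pdivrMr; lra.
have w0 : w <= 0.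
  rewrite -(pmulr_lle0 _ (_ : 0 < s * (2 - s * k))); last by rewrite mulr_gt0 //; lra.
  have := H (s%:C * ip y l).
  by rewrite -(ler_sqr (hnorm_ge0 y) (hnorm_ge0 _)) /= expand; lra.
have := sqr_ge0 (Re (ip y l)); have := sqr_ge0 (Im (ip y l)); rewrite /w in w0 => *.
by apply: complex_ReIm_eq => /=; apply/eqP; rewrite -sqrf_eq0 eq_le sqr_ge0 andbT; lra.
Qed.

Lemma midpoint_dist_sqr_le x a b (d s t : R) : 0 <= d -> 0 <= s -> 0 <= t ->
  nrm (x - a) <= d + s -> nrm (x - b) <= d + t ->
  d <= nrm (x - 2^-1 *: (a + b)) ->
  nrm (a - b) ^+ 2 <= 4 * d * (s + t) + 2 * (s ^+ 2 + t ^+ 2).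
Proof.
move=> d0 s0 t0 ha hb hm.
have := parallelogram (x - a) (x - b).
have -> : x - a + (x - b) = (2 : R)%:C *: (x - 2^-1 *: (a + b)).
  rewrite scalerBr scalerA rmorph_nat mulfV ?pnatr_eq0 // scale1r scaler_nat.
  by rewrite mulr2n opprD addrACA.
have -> : x - a - (x - b) = b - a by rewrite opprB addrC addrA subrK.
rewrite hnormZ ger0_norm // hnorm_distC.
have sq (u v : R) : 0 <= u -> u <= v -> u ^+ 2 <= v ^+ 2.
  by move=> u0 uv; rewrite ler_sqr ?nnegrE // (le_trans u0).
have := sq _ _ (hnorm_ge0 _) ha; have := sq _ _ (hnorm_ge0 _) hb.
have := sq _ _ d0 hm.
move: (nrm (x - a)) (nrm (x - b)) (nrm (x - _)) (nrm (b - a)) => na nb nm nab.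
rewrite !sqrrD exprMn => *; lra.
Qed.

Definition dense (L : V -> Prop) :=
  forall x e, 0 < e -> exists l, L l /\ nrm (x - l) < e.

Lemma ip_lim_eq u v x y h k : converges ip u x -> converges ip v y ->
  (forall n, ip (v n) h = ip (u n) k) -> ip y h = ip x k.
Proof.
move=> cu cv H.
have shift n : ip y h - ip x k = ip (y - v n) h - ip (x - u n) k.
  by rewrite !ipBl H opprB addrA subrK addrC.
have small (F : R[i] -> R) : (forall a b, F (a - b) = F a - F b) ->
    (forall a b, `|F (ip a b)| <= nrm a * nrm b) -> F (ip y h - ip x k) = 0.
  move=> FB Fle; apply: (@norm_le_scale_eq0 _ _ (nrm h + nrm k)).
    by rewrite addr_ge0 ?hnorm_ge0.
  move=> e e0; have [N1 H1] := cu e e0; have [N2 H2] := cv e e0.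
  rewrite (shift (maxn N1 N2)) FB mulrDl.
  apply: le_trans (ler_normB _ _) _; apply: lerD.
  - apply: le_trans (Fle _ _) _; rewrite hnorm_distC [_ * e]mulrC.
    by rewrite ler_wpM2r ?hnorm_ge0 // ltW // H2 // leq_maxr.
  - apply: le_trans (Fle _ _) _; rewrite hnorm_distC [_ * e]mulrC.
    by rewrite ler_wpM2r ?hnorm_ge0 // ltW // H1 // leq_maxl.
apply/eqP; rewrite -subr_eq0; apply/eqP; apply: complex_ReIm_eq.
- by apply: small; [move=> a b; rewrite raddfB | exact: norm_Re_ip_le].
- by apply: small; [move=> a b; rewrite raddfB | exact: norm_Im_ip_le].
Qed.

Lemma dense_Re_ip_le L v (K : R) : dense L -> 0 <= K ->
  (forall l, L l -> Re (ip l v) <= K * nrm l) ->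
  forall x, Re (ip x v) <= K * nrm x.
Proof.
move=> dL K0 H x; apply/ler_addgt0Pr => e e0.
pose c := nrm v + K + 1.
have c0 : 0 < c by rewrite /c; have := hnorm_ge0 v; lra.
have [l [Ll xl]] := dL x (e / c) (divr_gt0 e0 c0).
have -> : Re (ip x v) = Re (ip (x - l) v) + Re (ip l v).
  by rewrite ipBl raddfB subrK.
have h1 : Re (ip (x - l) v) <= e / c * nrm v.
  apply: le_trans (Re_ip_le _ _) _.
  by rewrite ler_wpM2r ?hnorm_ge0 ?ltW.
have h2 : K * nrm l <= K * nrm x + K * (e / c).
  rewrite -mulrDr ler_wpM2l //; have := hnormD x (l - x).
  by rewrite addrC subrK hnorm_distC; lra.
have h3 : e / c * nrm v + K * (e / c) <= e.
  have -> : e / c * nrm v + K * (e / c) = e / c * (c - 1) by rewrite /c; ring.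
  by rewrite -[leRHS](divfK (negbT (gt_eqF c0))) ler_wpM2l ?(ltW (divr_gt0 e0 c0)) //; lra.
have := H l Ll; lra.
Qed.

Lemma hnorm_le_dense_test L v (K : R) : dense L -> 0 <= K ->
  (forall l, L l -> Re (ip l v) <= K * nrm l) -> nrm v <= K.
Proof.
move=> dL K0 H; have := dense_Re_ip_le dL K0 H v; rewrite Re_ipxx //.
have [-> //|nz] := eqVneq (nrm v) 0.
have : 0 < nrm v by rewrite lt_def nz hnorm_ge0.
nra.
Qed.

Lemma dense_orthogonal_eq0 L w : dense L -> (forall l, L l -> ip l w = 0) -> w = 0.
Proof.
move=> dL H; apply: hnorm_eq0; apply/eqP; rewrite eq_le hnorm_ge0 andbT.
by apply: hnorm_le_dense_test dL _ _ => // l Ll; rewrite H // mul0r.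
Qed.

Lemma dense_ip_eq L a b : dense L -> (forall l, L l -> ip l a = ip l b) -> a = b.
Proof.
move=> dL H; apply/eqP; rewrite -subr_eq0; apply/eqP.
by apply: (dense_orthogonal_eq0 dL) => l Ll; rewrite ipBr H // subrr.
Qed.


(** * Hilbert spaces: projections and the Riesz representation *)

Hypothesis Hcomplete : is_complete ip.

Section Projection.
Variables (L : V -> Prop) (x : V).
Hypothesis HL : subspace L.

Lemma exists_minimizing_seq : exists (d : R) (g : nat -> V),
  [/\ 0 <= d, forall n, L (g n), forall n, nrm (x - g n) < d + n.+1%:R^-1 &
      forall l, L l -> d <= nrm (x - l)].
Proof.
pose E : set R := fun r => exists l, L l /\ r = nrm (x - l).
have hE : has_inf E.
  split; first by exists (nrm (x - 0)), 0; split => //; case: HL.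
  by exists 0 => r [l [_ ->]]; apply: hnorm_ge0.
have lb l : L l -> inf E <= nrm (x - l) by move=> Ll; apply: (ge_inf hE.2); exists l.
have [g Hg] : {g : nat -> V & forall n, L (g n) /\ nrm (x - g n) < inf E + n.+1%:R^-1}.
  apply: (boolp.choice (P := fun n l => L l /\ nrm (x - l) < inf E + n.+1%:R^-1)) => n.
  have n0 : 0 < n.+1%:R^-1 :> R by rewrite invr_gt0 ltr0Sn.
  have [_ [l [Ll ->]] hr] := inf_adherent n0 hE.
  by exists l.
exists (inf E), g; split => //; try by move=> n; case: (Hg n).
by apply: lb_le_inf hE.1 _ => r [l [_ ->]]; apply: hnorm_ge0.
Qed.

Lemma minimizing_seq_cauchy (d : R) (g : nat -> V) : 0 <= d -> (forall n, L (g n)) ->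
  (forall n, nrm (x - g n) < d + n.+1%:R^-1) -> (forall l, L l -> d <= nrm (x - l)) ->
  is_cauchy ip g.
Proof.
move=> d0 Lg near lb e e0.
pose del := Num.min 1 (e ^+ 2 / (8 * d + 8)).
have del0 : 0 < del by rewrite lt_min ltr01 divr_gt0 ?exprn_gt0 //; lra.
have del1 : del <= 1 by rewrite ge_min lexx.
have del2 : del * (8 * d + 8) <= e ^+ 2.
  by rewrite -ler_pdivlMr; [rewrite ge_min lexx orbT | lra].
have [N HN] := eventually_invS_lt del0.
exists N => m n hm hn.
set a := m.+1%:R^-1 : R; set b := n.+1%:R^-1 : R.
have a0 : 0 <= a by rewrite invr_ge0 ler0n.
have b0 : 0 <= b by rewrite invr_ge0 ler0n.
have ad : a < del := HN _ hm.
have bd : b < del := HN _ hn.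
have mid := lb _ (subspaceZ HL 2^-1 (subspaceD HL (Lg m) (Lg n))).
have := midpoint_dist_sqr_le d0 a0 b0 (ltW (near m)) (ltW (near n)) mid.
have ha2 : a ^+ 2 <= a by rewrite expr2 ler_piMl //; lra.
have hb2 : b ^+ 2 <= b by rewrite expr2 ler_piMl //; lra.
have hd : d * (a + b) <= d * (2 * del) by rewrite ler_wpM2l //; lra.
rewrite -(ltr_sqr (hnorm_ge0 _) (ltW e0)) /=; lra.
Qed.

Lemma projection : exists p,
  (forall e, 0 < e -> exists l, L l /\ nrm (p - l) < e) /\
  (forall l, L l -> ip (x - p) l = 0).
Proof.
have [d [g [d0 Lg near lb]]] := exists_minimizing_seq.
have [p gp] := Hcomplete (minimizing_seq_cauchy d0 Lg near lb).
exists p; split.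
  move=> e e0; have [N HN] := gp e e0.
  by exists (g N); rewrite hnorm_distC; split; [|apply: HN].
have xp : nrm (x - p) <= d.
  apply/ler_addgt0Pr => e e0.
  have e2 : 0 < e / 2 by rewrite divr_gt0.
  have [N HN] := gp _ e2; have [M HM] := eventually_invS_lt e2.
  have := hnormD (x - g (maxn N M)) (g (maxn N M) - p); rewrite addrA subrK.
  have := near (maxn N M); have := HN _ (leq_maxl N M); have := HM _ (leq_maxr N M).
  move: (nrm (x - p)) (nrm (x - g _)) (nrm (g _ - p)) ((maxn N M).+1%:R^-1).
  by move=> *; lra.
move=> l Ll; apply: orthogonal_of_nearest => t.
apply: le_trans xp _; apply/ler_addgt0Pr => e e0.
have [N HN] := gp e e0.
have := lb _ (subspaceD HL (Lg N) (subspaceZ HL t Ll)).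
have := ler_hnorm_dist (x - (g N + t *: l)) (x - p - t *: l).
have -> : x - (g N + t *: l) - (x - p - t *: l) = p - g N.
  by rewrite !opprD !opprK addrACA addNKr subrK.
rewrite (hnorm_distC p) ler_norml => /andP[_ h1] h2.
have := HN N (leqnn N); move: h1 h2.
by move: (nrm (x - (g N + t *: l))) (nrm (x - p - t *: l)) (nrm (g N - p)) => *; lra.
Qed.

End Projection.

Lemma subspace_dense L : subspace L ->
  (forall y, (forall l, L l -> ip y l = 0) -> y = 0) -> dense L.
Proof.
move=> HL Hperp x e e0; have [p [Hp Hq]] := projection x HL.
by move/Hperp/eqP: Hq; rewrite subr_eq0 => /eqP ->; apply: Hp.
Qed.

Lemma riesz_representation (phi : V -> R[i]) (c : R) :
  (forall a x y, phi (a *: x + y) = a * phi x + phi y) -> 0 <= c ->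
  (forall f, `|Re (phi f)| <= c * nrm f /\ `|Im (phi f)| <= c * nrm f) ->
  exists h, forall f, phi f = ip f h.
Proof.
move=> phi_lin c0 phi_bd.
have phi0 : phi 0 = 0.
  have := phi_lin 1 0 0; rewrite scale1r addr0 mul1r => h.
  by apply: (@addrI _ (phi 0)); rewrite -h addr0.
have phiZ a x : phi (a *: x) = a * phi x by rewrite -(addr0 (a *: x)) phi_lin phi0 addr0.
have phiD x y : phi (x + y) = phi x + phi y by rewrite -{1}(scale1r x) phi_lin mul1r.
have phiB x y : phi (x - y) = phi x - phi y by rewrite phiD -scaleN1r phiZ mulN1r.
pose N := fun f => phi f = 0.
have HN : subspace N by split => [|a x y]; rewrite /N ?phi_lin => // -> ->; rewrite mulr0 addr0.
have [phi_eq0|[y0 /eqP phiy0]] :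
    (forall f, phi f = 0) \/ exists y0, phi y0 <> 0.
  have [ex|nex] := boolp.EM (exists y0, phi y0 <> 0); [by right | left].
  by move=> f; apply: boolp.contrapT => hf; apply: nex; exists f.
  by exists 0 => f; rewrite phi_eq0 ip0r.
have [p [Np q_perp]] := projection y0 HN.
have phip : phi p = 0.
  have small (F : R[i] -> R) : (forall x, `|F (phi x)| <= c * nrm x) -> F (phi p) = 0.
    move=> Fle; apply: (norm_le_scale_eq0 c0) => e e0; have [l [Nl pl]] := Np e e0.
    rewrite -[p](subrK l) phiD Nl addr0.
    by apply: le_trans (Fle _) _; apply: ler_wpM2l => //; apply: ltW.
  by apply: complex_ReIm_eq; apply: small => x; case: (phi_bd x).
set q := y0 - p.
have phiq : phi q = phi y0 by rewrite /q phiB phip subr0.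
have qq : ip q q != 0.
  apply: contra phiy0 => /eqP q0; case: Hip => _ _ _ /(_ q q0) q_eq0.
  by rewrite -phiq q_eq0 phi0.
exists ((phi q / ip q q)^* *: q) => f.
have orth : ip q (f - (phi f / phi q) *: q) = 0.
  by rewrite q_perp // /N phiB phiZ mulfVK ?phiq // subrr.
move/eqP: orth; rewrite ipBr ipZr subr_eq0 => /eqP orth.
rewrite ipZr conjCK (ipC f) orth rmorphM /= conjCK -ipC.
by field; rewrite phiq; apply/andP.
Qed.

Section LinearOperators.
Variable T : op V.
Hypothesis HT : is_lin_op T.

Lemma lin_op0 : app T 0 = 0.
Proof.
case: HT => d0 _ hl; have := hl 1 0 0 d0 d0; rewrite scale1r addr0 scale1r => h.
by apply: (@addrI _ (app T 0)); rewrite -h addr0.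
Qed.

Lemma lin_opZ a x : dom T x -> app T (a *: x) = a *: app T x.
Proof. by case: HT => d0 _ hl dx; rewrite -(addr0 (a *: x)) hl // lin_op0 addr0. Qed.

Lemma lin_op_domZ a x : dom T x -> dom T (a *: x).
Proof. by case: HT => d0 hd _ dx; rewrite -(addr0 (a *: x)); apply: hd. Qed.

Hypothesis HTb : bounded ip T.

Let norm_set := [set r : R | exists f, [/\ dom T f, nrm f <= 1 & r = nrm (app T f)]]%classic.

Lemma op_norm_has_sup : has_sup norm_set.
Proof.
case: HTb => c [c0 hc]; split.
  by exists (nrm (app T 0)), 0; split => //; [case: HT | rewrite hnorm0 ler01].
exists c => r [f [df f1 ->]]; apply: (le_trans (hc f df)).
by rewrite -{2}(mulr1 c); apply: ler_wpM2l.
Qed.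

Lemma op_norm_ge0 : 0 <= op_norm ip T.
Proof.
apply: le_trans (hnorm_ge0 (app T 0)) (sup_upper_bound op_norm_has_sup _).
by exists 0; split => //; [case: HT | rewrite hnorm0 ler01].
Qed.

Lemma op_norm_bound f : dom T f -> nrm (app T f) <= op_norm ip T * nrm f.
Proof.
move=> df; have [f0|fn] := eqVneq (nrm f) 0.
  by rewrite (hnorm_eq0 f0) lin_op0 hnorm0 mulr0.
have fp : 0 < nrm f by rewrite lt_def fn hnorm_ge0.
pose u := (nrm f)^-1%:C *: f.
have nu : nrm (app T u) <= op_norm ip T.
  rewrite /op_norm; apply: (sup_upper_bound op_norm_has_sup); exists u; split => //.
    exact: lin_op_domZ.
  by rewrite hnormZ ger0_norm ?invr_ge0 ?hnorm_ge0 // mulVf.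
move: nu; rewrite /u lin_opZ // hnormZ ger0_norm ?invr_ge0 ?hnorm_ge0 //.
by rewrite mulrC ler_pdivrMr // mulrC.
Qed.

End LinearOperators.

Lemma op_norm_le (T : op V) (C : R) : dom T 0 -> 0 <= C ->
  (forall f, dom T f -> nrm (app T f) <= C * nrm f) -> op_norm ip T <= C.
Proof.
move=> d0 C0 H; apply: ge_sup.
  by exists (nrm (app T 0)), 0; split => //; rewrite hnorm0 ler01.
move=> r [f [df f1 ->]]; apply: (le_trans (H f df)).
by rewrite -{2}(mulr1 C); apply: ler_wpM2l.
Qed.

(* The vectors on which the adjoint identity holds form a closed extension of [A],
   which therefore contains [Abar]. *)
Lemma closure_adjoint (A Abar Astar : op V) f h :
  is_closure ip A Abar -> is_adjoint ip A Astar -> dom Abar f -> dom Astar h ->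
  ip (app Abar f) h = ip f (app Astar h).
Proof.
case=> linB clB extB minB [_ adjA].
pose C := Op (fun f => dom Abar f /\ forall h, dom Astar h ->
  ip (app Abar f) h = ip f (app Astar h)) (app Abar).
suff: extends Abar C by move=> ext df dh; have [[_ ->]] := ext f df.
apply: minB.
- case: (linB) => d0 dl al; split.
  + by split => // k dk; rewrite lin_op0 // !ip0l.
  + move=> a x y [dx hx] [dy hy]; split; first exact: dl.
    by move=> k dk; rewrite /= al // ipDl ipZl hx // hy // ipDl ipZl.
  + by move=> a x y [dx _] [dy _]; apply: al.
- move=> u x y du cu cv; have [dx ex] := clB u x y (fun n => (du n).1) cu cv.
  split => //; split => // k dk; rewrite ex.
  by apply: (ip_lim_eq cu cv) => n; apply: (du n).2.
- move=> g dg; have [dbg ebg] := extB g dg; split => //=.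
  by split => // k dk; rewrite ebg; apply: adjA.
Qed.

(* [weak_adj] is the adjoint of [M] on the dense set [G]; being closed, it witnesses
   the closability of every operator it extends. *)
Section WeakAdjoint.
Variables (G : V -> Prop) (M : V -> V).
Hypothesis HG : dense G.

Definition weak_adj_dom x := exists y, forall g, G g -> ip y g = ip x (M g).

Definition weak_adj_app x : V :=
  match boolp.pselect (weak_adj_dom x) with
  | left H => projT1 (boolp.cid H)
  | right _ => 0
  end.

Definition weak_adj := Op weak_adj_dom weak_adj_app.

Lemma weak_adj_appE x y : (forall g, G g -> ip y g = ip x (M g)) -> weak_adj_app x = y.
Proof.
move=> Hy; rewrite /weak_adj_app; case: boolp.pselect => [H|[]]; last by exists y.
have Hz := projT2 (boolp.cid H); move: (projT1 _) Hz => z Hz.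
by apply: (dense_ip_eq HG) => g Gg; rewrite ipC Hz // -Hy // -ipC.
Qed.

Lemma weak_adj_appP x : weak_adj_dom x ->
  forall g, G g -> ip (weak_adj_app x) g = ip x (M g).
Proof. by case=> y Hy; rewrite (weak_adj_appE Hy). Qed.

Lemma weak_adj_lin : is_lin_op weak_adj.
Proof.
split.
- by exists 0 => g _; rewrite !ip0l.
- move=> a x y [yx hx] [yy hy]; exists (a *: yx + yy) => g Gg.
  by rewrite !ipDl !ipZl hx // hy.
- move=> a x y dx dy /=; apply: weak_adj_appE => g Gg.
  by rewrite !ipDl !ipZl !weak_adj_appP.
Qed.

Lemma weak_adj_closed : is_closed ip weak_adj.
Proof.
move=> u x y du cu cv.
have Hy g : G g -> ip y g = ip x (M g).
  by move=> Gg; apply: (ip_lim_eq cu cv) => n; apply: weak_adj_appP => //; apply: du.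
by split; [exists y | apply: weak_adj_appE].
Qed.

Lemma closable_of_weak_adjoint (T : op V) :
  (forall p g, dom T p -> G g -> ip (app T p) g = ip p (M g)) -> closable ip T.
Proof.
move=> HT; exists weak_adj; split; [exact: weak_adj_lin | exact: weak_adj_closed|].
move=> f df; have Hf g : G g -> ip (app T f) g = ip f (M g) by apply: HT.
by split; [exists (app T f) | apply: weak_adj_appE].
Qed.

End WeakAdjoint.

Lemma op_pow_app (T : op V) n f : app (op_pow T n) f = iter n (app T) f.
Proof. by elim: n => //= n ->. Qed.

Lemma iter_linear (Q : V -> V) n :
  (forall a x y, Q (a *: x + y) = a *: Q x + Q y) ->
  forall a x y, iter n Q (a *: x + y) = a *: iter n Q x + iter n Q y.
Proof. by move=> HQ a x y; elim: n => //= n ->; rewrite HQ. Qed.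

Section IteratedMaps.
Variables (Q Qs : V -> V) (n : nat).
Hypothesis Qlin : forall a x y, Q (a *: x + y) = a *: Q x + Q y.
Hypothesis QsP : forall f g, ip (Q f) g = ip f (Qs g).
Hypothesis Qs_inj : forall g, Qs g = 0 -> g = 0.

Lemma iter_adjoint f g : ip (iter n Q f) g = ip f (iter n Qs g).
Proof. by elim: n g => //= k IH g; rewrite QsP IH -iterSr. Qed.

Lemma subspace_range_iter : subspace (fun f => exists g, f = iter n Q g).
Proof.
split; last first.
  by move=> a _ _ [x ->] [y ->]; exists (a *: x + y); rewrite iter_linear.
exists 0; have := iter_linear n Qlin 1 0 0; rewrite scale1r addr0 scale1r => h.
by apply: (@addrI _ (iter n Q 0)); rewrite -h addr0.
Qed.

Lemma dense_range_iter : dense (fun f => exists g, f = iter n Q g).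
Proof.
apply: (subspace_dense subspace_range_iter) => y Hy.
have Qs_n0 : iter n Qs y = 0.
  apply: hnorm_eq0; rewrite /hnorm -iter_adjoint ipC Hy ?rmorph0 ?sqrtr0 //.
  by eexists.
have iter_inj k x : iter k Qs x = 0 -> x = 0 by elim: k x => //= k IH x /Qs_inj /IH.
exact: iter_inj Qs_n0.
Qed.

End IteratedMaps.

(* [Q] plays the role of [(T - w)^-1], so that [T Q = 1 + w Q]. *)
Lemma iter_in_op_pow_dom (T : op V) (Q : V -> V) (w : R[i]) :
  (forall a x y, Q (a *: x + y) = a *: Q x + Q y) ->
  (forall g, dom T (Q g) /\ app T (Q g) = g + w *: Q g) ->
  forall k n g, (k <= n)%N -> dom (op_pow T k) (iter n Q g).
Proof.
move=> Qlin TQ; suff H : forall k n g, (k <= n)%N -> dom (op_pow T k) (iter n Q g) /\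
    exists h, app (op_pow T k) (iter n Q g) = iter (n - k) Q h.
  by move=> k n g kn; case: (H k n g kn).
elim=> [|k IH] n g kn; first by split => //; exists g; rewrite subn0.
have [d [h e]] := IH n g (ltnW kn).
rewrite -subnSK // /= in e; have [dQ eQ] := TQ (iter (n - k.+1) Q h).
split; first by split => //; rewrite e.
by exists (w *: Q h + h); rewrite /= e eQ iter_linear // -iterSr addrC.
Qed.

Lemma adjoint0 (T Ts : op V) : densely_defined ip T -> is_adjoint ip T Ts ->
  dom Ts 0 /\ app Ts 0 = 0.
Proof.
move=> dT [domTs adjT]; have d0 : dom Ts 0 by apply/domTs; exists 0 => f _; rewrite !ip0r.
split => //; apply: (dense_ip_eq dT) => f df.
by rewrite -adjT // !ip0r.
Qed.

(** * The resolvent and its adjoint *)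

Section Resolvent.
Variables (S Sstar Rz : op V) (z : R[i]).
Hypothesis HS : is_lin_op S.
Hypothesis HSdense : densely_defined ip S.
Hypothesis HSstar : is_adjoint ip S Sstar.
Hypothesis HRz : is_resolvent ip S z Rz.

Lemma resolvent_dom f : dom Rz f.
Proof. by case: HRz. Qed.

Lemma resolvent_lin a x y : app Rz (a *: x + y) = a *: app Rz x + app Rz y.
Proof. by case: HRz => [[_ _ hl] _ _ _ _]; apply: hl; apply: resolvent_dom. Qed.

Lemma resolventB x y : app Rz (x - y) = app Rz x - app Rz y.
Proof.
by rewrite -scaleN1r addrC resolvent_lin scaleN1r addrC.
Qed.

Lemma S_resolvent g : dom S (app Rz g) /\ app S (app Rz g) = g + z *: app Rz g.
Proof.
case: HRz => _ _ _ /(_ g) [d /= e] _; split => //.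
by rewrite -[X in _ = X + _]e subrK.
Qed.

Lemma resolvent_S f : dom S f -> app Rz (app S f) = f + z *: app Rz f.
Proof.
move=> df; case: HRz => Rlin _ _ _ /(_ f df) /=.
rewrite resolventB (lin_opZ Rlin _ (resolvent_dom _)) => e.
by rewrite -[X in _ = X + _]e subrK.
Qed.

Lemma resolvent_bound f : nrm (app Rz f) <= op_norm ip Rz * nrm f.
Proof. by case: HRz => Rlin _ Rb _ _; apply: op_norm_bound => //; apply: resolvent_dom. Qed.

Lemma resolvent_norm_ge0 : 0 <= op_norm ip Rz.
Proof. by case: HRz => Rlin _ Rb _ _; apply: op_norm_ge0. Qed.

Lemma resolvent_inj g : app Rz g = 0 -> g = 0.
Proof.
by move=> h; have [_] := S_resolvent g; rewrite h scaler0 addr0 lin_op0.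
Qed.

Lemma exists_resolvent_adj g : exists h, forall f, ip (app Rz f) g = ip f h.
Proof.
apply: (@riesz_representation (fun f => ip (app Rz f) g) (op_norm ip Rz * nrm g)).
- by move=> a x y; rewrite resolvent_lin ipDl ipZl.
- by rewrite mulr_ge0 ?hnorm_ge0 ?resolvent_norm_ge0.
- move=> f; rewrite mulrAC; split.
  + apply: le_trans (norm_Re_ip_le _ _) _.
    by rewrite ler_wpM2r ?hnorm_ge0 ?resolvent_bound.
  + apply: le_trans (norm_Im_ip_le _ _) _.
    by rewrite ler_wpM2r ?hnorm_ge0 ?resolvent_bound.
Qed.

Definition resolvent_adj : V -> V := projT1 (boolp.choice exists_resolvent_adj).
Local Notation Rs := resolvent_adj.

Lemma resolvent_adjP f g : ip (app Rz f) g = ip f (Rs g).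
Proof. exact: (projT2 (boolp.choice exists_resolvent_adj) g f). Qed.

Lemma resolvent_adj_lin a x y : Rs (a *: x + y) = a *: Rs x + Rs y.
Proof. by apply: ip_eq_all => f; rewrite -resolvent_adjP !ipDr !ipZr -!resolvent_adjP. Qed.

Lemma resolvent_adjB x y : Rs (x - y) = Rs x - Rs y.
Proof. by apply: ip_eq_all => f; rewrite -resolvent_adjP !ipBr -!resolvent_adjP. Qed.

Lemma resolvent_adj_bound g : nrm (Rs g) <= op_norm ip Rz * nrm g.
Proof.
have [->|nz] := eqVneq (nrm (Rs g)) 0; first by rewrite mulr_ge0 ?hnorm_ge0 ?resolvent_norm_ge0.
have pos : 0 < nrm (Rs g) by rewrite lt_def nz hnorm_ge0.
rewrite -(ler_pM2r pos) -expr2 -Re_ipxx -resolvent_adjP mulrAC.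
apply: le_trans (Re_ip_le _ _) _.
by rewrite ler_wpM2r ?hnorm_ge0 ?resolvent_bound.
Qed.

Lemma Sstar_resolvent_adj g :
  dom Sstar (Rs g) /\ app Sstar (Rs g) = g + z^* *: Rs g.
Proof.
case: HSstar => domSs adjS.
have key f : dom S f -> ip (app S f) (Rs g) = ip f (g + z^* *: Rs g).
  by move=> df; rewrite -resolvent_adjP resolvent_S // ipDl ipZl resolvent_adjP ipDr ipZr conjCK.
have d : dom Sstar (Rs g) by apply/domSs; exists (g + z^* *: Rs g).
by split => //; apply: (dense_ip_eq HSdense) => f df; rewrite -adjS // key.
Qed.

Lemma resolvent_adj_inj g : Rs g = 0 -> g = 0.
Proof.
move=> h; have [_] := Sstar_resolvent_adj g; rewrite h scaler0 addr0 => <-.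
by case: (adjoint0 HSdense HSstar).
Qed.

End Resolvent.

(** * Commutators with powers of the resolvent *)

Section Commutator.
Variables (A Abar Astar S Sstar Rz : op V) (z : R[i]) (m : nat).
Hypothesis HAbar : is_closure ip A Abar.
Hypothesis HAstar : is_adjoint ip A Astar.
Hypothesis HS : is_lin_op S.
Hypothesis HSdense : densely_defined ip S.
Hypothesis HSstar : is_adjoint ip S Sstar.
Hypothesis HRz : is_resolvent ip S z Rz.
Hypothesis HdomS : dom_sub (op_pow S m) Abar.
Hypothesis HdomSstar : dom_sub (op_pow Sstar m) Astar.

Local Notation Rs := (resolvent_adj HRz).

Lemma resolvent_adjP' f g : ip (Rs f) g = ip f (app Rz g).
Proof. by rewrite ipC -resolvent_adjP -ipC. Qed.

Lemma dom_closure_iter_resolvent n g : (m <= n)%N -> dom Abar (iter n (app Rz) g).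
Proof.
move=> mn; apply: HdomS.
exact: (iter_in_op_pow_dom (resolvent_lin HRz) (S_resolvent HRz) _ mn).
Qed.

Lemma dom_adjoint_iter_resolvent_adj n g : (m <= n)%N -> dom Astar (iter n Rs g).
Proof.
move=> mn; apply: HdomSstar.
exact: (iter_in_op_pow_dom (resolvent_adj_lin HRz) (Sstar_resolvent_adj HSdense HSstar HRz) _ mn).
Qed.

Definition range_resolvent_pow f := exists g, f = iter m (app Rz) g.
Definition range_resolvent_adj_pow g := exists h, g = iter m Rs h.

Lemma dense_range_resolvent_pow : dense range_resolvent_pow.
Proof.
exact (dense_range_iter m (resolvent_lin HRz) (resolvent_adjP HRz)
  (resolvent_adj_inj HSdense HSstar (HRz := HRz))).
Qed.

Lemma dense_range_resolvent_adj_pow : dense range_resolvent_adj_pow.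
Proof.
exact (dense_range_iter m (resolvent_adj_lin HRz) resolvent_adjP'
  (resolvent_inj HS HRz)).
Qed.

Lemma dom_ad_range_resolvent_pow f : range_resolvent_pow f -> dom (ad Rz Abar) f.
Proof.
case=> g ->; split; split; try apply: (resolvent_dom HRz).
  exact: dom_closure_iter_resolvent.
by rewrite -iterS; apply: dom_closure_iter_resolvent; apply: leqW.
Qed.

(* On the dense set [range_resolvent_adj_pow], the adjoint of [ad Rz Abar] acts as
   [g |-> Astar (Rs g) - Rs (Astar g)]. *)
Definition ad_adj g := app Astar (Rs g) - Rs (app Astar g).

Lemma ad_ipE p g : dom (ad Rz Abar) p -> range_resolvent_adj_pow g ->
  ip (app (ad Rz Abar) p) g = ip p (ad_adj g).
Proof.
case=> [[dAp _] [_ dARp]] [h ->].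
have dg := dom_adjoint_iter_resolvent_adj h (leqnn m).
have dRg : dom Astar (Rs (iter m Rs h)).
  by rewrite -iterS; apply: dom_adjoint_iter_resolvent_adj; apply: leqW.
rewrite /= ipBl (resolvent_adjP HRz) (closure_adjoint HAbar HAstar dAp dRg).
by rewrite (closure_adjoint HAbar HAstar dARp dg) (resolvent_adjP HRz) ipBr.
Qed.

Lemma ad_resolvent_closable_dense :
  closable ip (ad Rz Abar) /\ densely_defined ip (ad Rz Abar).
Proof.
split; first exact: closable_of_weak_adjoint dense_range_resolvent_adj_pow _ ad_ipE.
move=> x e e0; have [l [Ll xl]] := dense_range_resolvent_pow x e0.
by exists l; split => //; apply: dom_ad_range_resolvent_pow.
Qed.

Lemma ad_resolvent_lin : is_lin_op (ad Rz Abar).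
Proof.
have [d0 dl al] : is_lin_op Abar by case: HAbar.
have Rlin : is_lin_op Rz by case: HRz.
have Rdom := resolvent_dom HRz; have Rl := resolvent_lin HRz.
split.
- by split; split => //; rewrite lin_op0.
- move=> a x y [[dx _] [_ dRx]] [[dy _] [_ dRy]].
  by split; split => //; rewrite ?Rl; apply: dl.
- move=> a x y [[dx _] [_ dRx]] [[dy _] [_ dRy]] /=.
  by rewrite al // !Rl al // scalerBr addrACA -opprD.
Qed.

Lemma range_resolvent_adj_pow_iter k g :
  range_resolvent_adj_pow g -> range_resolvent_adj_pow (iter k Rs g).
Proof. by case=> h ->; exists (iter k Rs h); rewrite -!iterD addnC. Qed.

Lemma dom_adjoint_range g : range_resolvent_adj_pow g -> dom Astar g.
Proof. by case=> h ->; apply: dom_adjoint_iter_resolvent_adj. Qed.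

Lemma iter_resolvent_adj_bound k g : nrm (iter k Rs g) <= op_norm ip Rz ^+ k * nrm g.
Proof.
elim: k => [|k IH] /=; first by rewrite expr0 mul1r.
apply: le_trans (resolvent_adj_bound HRz _) _; rewrite exprS -mulrA.
by rewrite ler_wpM2l // (resolvent_norm_ge0 HRz).
Qed.

Definition ad_pow_adj k g := app Astar (iter k Rs g) - iter k Rs (app Astar g).

(* telescoping: [ad(R^(k+1), A) = ad(R, A) R^k + R ad(R^k, A)], on the adjoint side *)
Lemma ad_pow_adjS k g : ad_pow_adj k.+1 g = ad_adj (iter k Rs g) + Rs (ad_pow_adj k g).
Proof. by rewrite /ad_pow_adj /ad_adj (resolvent_adjB HRz) /= addrA subrK. Qed.

Lemma ad_pow_ipE f g : dom (ad (op_pow Rz m) Abar) f -> range_resolvent_adj_pow g ->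
  ip (app (ad (op_pow Rz m) Abar) f) g = ip f (ad_pow_adj m g).
Proof.
move=> [[dAf _] [_ dARf]] Gg; rewrite op_pow_app in dARf.
have dg := dom_adjoint_range Gg.
have dRg := dom_adjoint_range (range_resolvent_adj_pow_iter m Gg).
rewrite /= !op_pow_app ipBl (iter_adjoint m (resolvent_adjP HRz)).
rewrite (closure_adjoint HAbar HAstar dAf dRg) (closure_adjoint HAbar HAstar dARf dg).
by rewrite (iter_adjoint m (resolvent_adjP HRz)) ipBr.
Qed.

Section BoundedCommutator.
Hypothesis Hb : bounded ip (ad Rz Abar).
Local Notation r := (op_norm ip Rz).
Local Notation N := (op_norm ip (ad Rz Abar)).

Lemma ad_adj_bound g : range_resolvent_adj_pow g -> nrm (ad_adj g) <= N * nrm g.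
Proof.
move=> Gg; have N0 : 0 <= N by exact: op_norm_ge0 ad_resolvent_lin Hb.
apply: (hnorm_le_dense_test dense_range_resolvent_pow); first by rewrite mulr_ge0 ?hnorm_ge0.
move=> l Ll; have dl := dom_ad_range_resolvent_pow Ll.
rewrite -(ad_ipE dl Gg); apply: le_trans (Re_ip_le _ _) _.
by rewrite mulrAC ler_wpM2r ?hnorm_ge0 // (op_norm_bound ad_resolvent_lin Hb).
Qed.

Lemma ad_pow_adj_bound k g : range_resolvent_adj_pow g ->
  nrm (ad_pow_adj k g) <= k%:R * r ^+ k.-1 * N * nrm g.
Proof.
move=> Gg; have r0 := resolvent_norm_ge0 HRz.
have N0 : 0 <= N by exact: op_norm_ge0 ad_resolvent_lin Hb.
elim: k => [|k IH]; first by rewrite /ad_pow_adj /= subrr hnorm0 !mul0r.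
rewrite ad_pow_adjS; apply: le_trans (hnormD _ _) _.
have h1 : nrm (ad_adj (iter k Rs g)) <= r ^+ k * N * nrm g.
  apply: le_trans (ad_adj_bound (range_resolvent_adj_pow_iter k Gg)) _.
  by rewrite [r ^+ k * N]mulrC -mulrA ler_wpM2l // iter_resolvent_adj_bound.
have h2 : nrm (Rs (ad_pow_adj k g)) <= k%:R * r ^+ k * N * nrm g.
  apply: le_trans (resolvent_adj_bound HRz _) _.
  apply: le_trans (ler_wpM2l r0 IH) _; rewrite le_eqVlt; apply/orP; left; apply/eqP.
  by case: k {IH h1} => [|k]; [rewrite !mul0r mulr0 | rewrite succnK exprS; ring].
apply: le_trans (lerD h1 h2) _; rewrite le_eqVlt; apply/orP; left; apply/eqP.
by rewrite succnK -addn1 natrD; ring.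
Qed.

Lemma ad_resolvent_pow_bound : bounded ip (ad (op_pow Rz m) Abar) /\
  op_norm ip (ad (op_pow Rz m) Abar) <= m%:R * r ^+ (m - 1) * N.
Proof.
pose C := m%:R * r ^+ (m - 1) * N.
have C0 : 0 <= C.
  by rewrite !mulr_ge0 ?ler0n ?exprn_ge0 ?(resolvent_norm_ge0 HRz) ?(op_norm_ge0 ad_resolvent_lin Hb).
have bound f : dom (ad (op_pow Rz m) Abar) f ->
    nrm (app (ad (op_pow Rz m) Abar) f) <= C * nrm f.
  move=> df; apply: (hnorm_le_dense_test dense_range_resolvent_adj_pow).
    by rewrite mulr_ge0 ?hnorm_ge0.
  move=> l Gl; rewrite ipC Re_conj ad_pow_ipE //.
  apply: le_trans (Re_ip_le _ _) _.
  rewrite mulrAC [_ * nrm f]mulrC ler_wpM2l ?hnorm_ge0 //.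
  by rewrite /C subn1; apply: ad_pow_adj_bound.
split; first by exists C.
apply: op_norm_le C0 bound.
have [d0 _ _] : is_lin_op Abar by case: HAbar.
have Rlin : is_lin_op Rz by case: HRz.
have Rpow0 : app (op_pow Rz m) 0 = 0.
  by rewrite op_pow_app; elim: m => //= n ->; rewrite lin_op0.
have pow_dom n x : dom (op_pow Rz n) x.
  by elim: n x => //= n IH x; split => //; apply: (resolvent_dom HRz).
by split; split; rewrite ?Rpow0 //; apply: pow_dom.
Qed.

End BoundedCommutator.

End Commutator.

End InnerProductSpace.

Theorem lemma9 (R : realType) (K : lmodType R[i]) (ip : K -> K -> R[i])
  (Hip : is_inner_product ip) (Hcomplete : is_complete ip)
  (A Abar Astar : op K) (S Sstar Rz : op K) (z : R[i]) (m : nat)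
  (HA : is_lin_op A) (HAcl : closable ip A) (HAdense : densely_defined ip A)
  (HAbar : is_closure ip A Abar) (HAstar : is_adjoint ip A Astar)
  (HS : is_lin_op S) (HScl : is_closed ip S) (HSdense : densely_defined ip S)
  (HSstar : is_adjoint ip S Sstar)
  (Hz : in_resolvent_set ip S z) (HRz : is_resolvent ip S z Rz)
  (Hm : (1 <= m)%N)
  (HdomS : dom_sub (op_pow S m) Abar)
  (HdomSstar : dom_sub (op_pow Sstar m) Astar) :
  (closable ip (ad Rz Abar) /\ densely_defined ip (ad Rz Abar)) /\
  (bounded ip (ad Rz Abar) ->
     bounded ip (ad (op_pow Rz m) Abar) /\
     op_norm ip (ad (op_pow Rz m) Abar)
       <= m%:R * op_norm ip Rz ^+ (m - 1) * op_norm ip (ad Rz Abar)).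
Proof.
split; first exact: (ad_resolvent_closable_dense Hip Hcomplete HAbar HAstar HS
  HSdense HSstar HRz HdomS HdomSstar).
exact: (ad_resolvent_pow_bound Hip Hcomplete HAbar HAstar HS HSdense HSstar HRz
  HdomS HdomSstar).
Qed.
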